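(* Let $\Gamma=(M,E)$ be a reaction network with stoichiometric matrix $\mathbb S$ and $n=\dim\ker\mathbb S^T\ge0$. Then $\Gamma$ is nondegenerate if and only if there exists an invertible $(|M|-n)\times(|M|-n)$ Child-Selection matrix of $\Gamma$.
   Context: Reaction $j$ is $\sum_m s^j_m\mathsf m\to\sum_m\tilde s^j_m\mathsf m$ with $s^j_m,\tilde s^j_m\ge0$; $\mathbb S_{mj}=\tilde s^j_m-s^j_m$. A reactivity matrix is an $|E|\times|M|$ matrix $R$ with $R_{jm}>0$ if $s^j_m>0$ and $R_{jm}=0$ otherwise; the symbolic Jacobian is $G=\mathbb S R$. $\Gamma$ is nondegenerate if for some reactivity matrix $R$, $\mathbb S R$ has a nonzero $(|M|-n)\times(|M|-n)$ principal minor. A $k$-Child-Selection ($k$-CS) is a triple $\boldsymbol\kappa=(\kappa,E_\kappa,J)$ with $\kappa\subseteq M$, $E_\kappa\subseteq E$, $|\kappa|=|E_\kappa|=k$, and $J:\kappa\to E_\kappa$ a bijection with $s^{J(m)}_m>0$ for all $m\in\kappa$ (each species is a reactant of its assigned reaction). Its CS-matrix is the $k\times k$ matrix $\mathbb S[\boldsymbol\kappa]_{ml}=\mathbb S_{m,J(l)}$, $m,l\in\kappa$. *)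

From mathcomp Require Import all_boot all_order all_algebra.
From mathcomp Require Import reals.
Set Implicit Arguments. Unset Strict Implicit. Unset Printing Implicit Defensive.
Import Order.TTheory GRing.Theory Num.Theory.
Local Open Scope ring_scope.

(* A reaction network with species M = 'I_m and reactions E = 'I_e is given
   by the reactant coefficients s (s i j = s^j_i) and product coefficients
   st (st i j = tilde s^j_i), both m x e matrices with nonnegative entries. *)
Definition network_coeffs (R : realType) (m e : nat) (s st : 'M[R]_(m, e)) :=
  forall i j, 0 <= s i j /\ 0 <= st i j.

Definition stoich (R : realType) (m e : nat) (s st : 'M[R]_(m, e)) : 'M[R]_(m, e) :=
  st - s.

(* n = dim ker S^T ; ker S^T = { u : u *m S = 0 } = row kernel of S *)
Definition nconserv (R : realType) (m e : nat) (s st : 'M[R]_(m, e)) : nat :=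
  \rank (kermx (stoich s st)).

Definition reactivity (R : realType) (m e : nat) (s : 'M[R]_(m, e))
  (Rm : 'M[R]_(e, m)) : Prop :=
  forall j i, (0 < s i j -> 0 < Rm j i) /\ (~ 0 < s i j -> Rm j i = 0).

Definition has_nonzero_principal_minor (R : realType) (m k : nat)
  (G : 'M[R]_m) : Prop :=
  exists f : 'I_k -> 'I_m, injective f /\ \det (mxsub f f G) != 0.

Definition crn_nondegenerate (R : realType) (m e : nat) (s st : 'M[R]_(m, e)) : Prop :=
  exists Rm : 'M[R]_(e, m), reactivity s Rm /\
    has_nonzero_principal_minor (m - nconserv s st) (stoich s st *m Rm).

(* k-Child-Selection: f enumerates kappa (injective), J is given via
   g = J o f (injective, enumerating E_kappa); each species f i is a reactant
   of its reaction g i. *)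
Definition child_selection (R : realType) (m e k : nat) (s : 'M[R]_(m, e))
  (f : 'I_k -> 'I_m) (g : 'I_k -> 'I_e) : Prop :=
  injective f /\ injective g /\ forall i, 0 < s (f i) (g i).

Definition cs_matrix (R : realType) (m e k : nat) (S : 'M[R]_(m, e))
  (f : 'I_k -> 'I_m) (g : 'I_k -> 'I_e) : 'M[R]_k :=
  \matrix_(i, l) S (f i) (g l).

From mathcomp Require Import all_boot all_order all_algebra.
From mathcomp Require Import reals perm.
Set Implicit Arguments. Unset Strict Implicit. Unset Printing Implicit Defensive.
Import Order.TTheory GRing.Theory Num.Theory.
Local Open Scope ring_scope.

(* Expanding multilinearly, the principal minor of [S R] on the species [f]
   is a sum over maps [h] from [f] to reactions of [prod_i R (h i) (f i)]
   times the determinant of the rows [f] and columns [h] of [S], which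
   vanishes unless [h] is injective.
   So a nonzero minor has a nonzero term, i.e. a Child-Selection whose
   CS-matrix is invertible.  Conversely, given a Child-Selection with
   invertible CS-matrix [A], take [R = R0 + t P] where [P] has its entries on
   the selected pairs and [R0] covers the remaining reactant pattern: the
   minor is [det (A (t I + A^-1 B))], a monic polynomial in [t] up to the
   factor [det A], so it is nonzero for all but finitely many [t > 0]. *)

Lemma det_mulmx_sum_colsub (R : comPzRingType) k e
    (X : 'M[R]_(k, e)) (Y : 'M[R]_(e, k)) :
  \det (X *m Y) =
    \sum_(h : {ffun 'I_k -> 'I_e}) (\prod_i Y (h i) i) * \det (colsub h X).
Proof.
rewrite -det_tr trmx_mul /(\det _).
transitivity (\sum_(sg : 'S_k) \sum_(h : {ffun 'I_k -> 'I_e})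
   (-1) ^+ sg * \prod_i (Y (h i) i * X (sg i) (h i))).
  apply: eq_bigr => sg _; rewrite -big_distrr /=; congr (_ * _).
  rewrite -(bigA_distr_bigA (fun i j => Y j i * X (sg i) j)) /=.
  by apply: eq_bigr => i _; rewrite mxE; apply: eq_bigr => j _; rewrite !mxE.
rewrite exchange_big /=; apply: eq_bigr => h _.
rewrite -det_tr /(\det _) big_distrr /=; apply: eq_bigr => sg _.
rewrite big_split /= mulrCA; congr (_ * (_ * _)).
by apply: eq_bigr => i _; rewrite !mxE.
Qed.

Lemma det_colsub_neq0_inj (R : comPzRingType) k e
    (X : 'M[R]_(k, e)) (h : 'I_k -> 'I_e) :
  \det (colsub h X) != 0 -> injective h.
Proof.
move=> det_neq0; apply/injectiveP; apply: contraNT det_neq0.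
move=> /injectivePn[i [j neq_ij eq_hij]].
rewrite -det_tr (determinant_alternate neq_ij) // => l.
by rewrite !mxE eq_hij.
Qed.

Lemma det_mulmx_neq0_colsub (R : idomainType) k e
    (X : 'M[R]_(k, e)) (Y : 'M[R]_(e, k)) :
  \det (X *m Y) != 0 ->
  exists h : 'I_k -> 'I_e,
    [/\ injective h, forall i, Y (h i) i != 0 & \det (colsub h X) != 0].
Proof.
rewrite det_mulmx_sum_colsub.
pose term (h : {ffun 'I_k -> 'I_e}) := (\prod_i Y (h i) i) * \det (colsub h X).
case: (pickP (fun h => term h != 0)) => [h | none]; last first.
  by rewrite big1 ?eqxx // => h _; apply/eqP/negbFE/none.
rewrite /term mulf_eq0 negb_or => /andP[/prodf_neq0 Y_neq0 det_neq0] _.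
exists h; split => //; last by move=> i; exact: Y_neq0.
exact: det_colsub_neq0_inj det_neq0.
Qed.

Lemma exists_pos_det_scalar_add_neq0 (R : numDomainType) k (C : 'M[R]_k) :
  exists2 t : R, 0 < t & \det (t%:M + C) != 0.
Proof.
pose p := char_poly (- C).
have pE t : p.[t] = \det (t%:M + C).
  rewrite -[p.[t]]/(horner_eval t p) /p /char_poly -det_map_mx; congr (\det _).
  apply/matrixP => i j; rewrite !mxE.
  change (('X *+ (i == j) - (- C i j)%:P).[t] = t *+ (i == j) + C i j).
  by rewrite hornerD hornerN hornerMn hornerX hornerC opprK.
have p_neq0 : p != 0 by rewrite -size_poly_eq0 size_char_poly.
pose candidates := [seq i.+1%:R : R | i <- iota 0 k.+1].
have uniq_candidates : uniq candidates.
  by rewrite map_inj_uniq ?iota_uniq // => i j /eqP; rewrite eqr_nat => /eqP [].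
have : ~~ all (root p) candidates.
  apply/negP => all_roots; have := max_poly_roots p_neq0 all_roots uniq_candidates.
  by rewrite size_map size_iota size_char_poly ltnn.
case/allPn => _ /mapP[i _ ->] not_root.
by exists i.+1%:R; rewrite ?ltr0Sn // -pE.
Qed.

Section SelectionMatrix.

Variables (R : pzSemiRingType) (m e k : nat).
Variables (f : 'I_k -> 'I_m) (g : 'I_k -> 'I_e).

Definition selected j i := [exists b, (f b == i) && (g b == j)].

Definition selection_mx : 'M[R]_(e, m) := \matrix_(j, i) (selected j i)%:R.

Hypothesis f_inj : injective f.

Lemma selected_f j b : selected j (f b) = (g b == j).
Proof.
apply/existsP/idP => [[b' /andP[/eqP/f_inj -> //]] | g_b].
by exists b; rewrite eqxx.
Qed.

Lemma mul_selection_mx (S : 'M[R]_(m, e)) :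
  rowsub f S *m colsub f selection_mx = colsub g (rowsub f S).
Proof.
apply/matrixP => a b; rewrite !mxE (bigD1 (g b)) //= big1 ?addr0.
  by rewrite !mxE selected_f eqxx mulr1.
by move=> j /negPf g_b; rewrite !mxE selected_f eq_sym g_b mulr0.
Qed.

End SelectionMatrix.

Section ChildSelections.

Variables (R : realType) (m e : nat) (s S : 'M[R]_(m, e)).

Lemma cs_matrixE k (f : 'I_k -> 'I_m) (g : 'I_k -> 'I_e) :
  cs_matrix S f g = colsub g (rowsub f S).
Proof. by apply/matrixP => i j; rewrite !mxE. Qed.

Lemma child_selection_of_principal_minor k (Rm : 'M[R]_(e, m))
    (f : 'I_k -> 'I_m) :
  reactivity s Rm -> injective f -> \det (mxsub f f (S *m Rm)) != 0 ->
  exists g, child_selection s f g /\ cs_matrix S f g \in unitmx.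
Proof.
move=> Rm_react f_inj; rewrite mxsub_mul.
case/det_mulmx_neq0_colsub => g [g_inj Rm_neq0 det_neq0].
exists g; split; last by rewrite unitmxE unitfE cs_matrixE.
split; [by [] | split=> [//|i]].
case: (boolP (0 < s (f i) (g i))) => // /negP not_reactant.
by have := Rm_neq0 i; rewrite mxE (proj2 (Rm_react _ _) not_reactant) eqxx.
Qed.

Definition unselected_reactant_mx k (f : 'I_k -> 'I_m) (g : 'I_k -> 'I_e) :
  'M[R]_(e, m) := \matrix_(j, i) ((0 < s i j) && ~~ selected f g j i)%:R.

Lemma reactivity_unselected_add_selection k (f : 'I_k -> 'I_m)
    (g : 'I_k -> 'I_e) (t : R) :
  child_selection s f g -> 0 < t ->
  reactivity s (unselected_reactant_mx f g + t *: selection_mx R f g).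
Proof.
move=> [_ [_ selected_pos]] t_pos j i; rewrite !mxE; split.
  by move=> ->; case: selected; rewrite ?mulr1 ?mulr0 ?addr0 ?add0r.
move=> /negP not_reactant; rewrite (negPf not_reactant) add0r.
case: (boolP (selected f g j i)) => [/existsP[b /andP[/eqP fb /eqP gb]] | _].
  by move: (selected_pos b); rewrite fb gb (negPf not_reactant).
by rewrite mulr0.
Qed.

Lemma principal_minor_of_child_selection k (f : 'I_k -> 'I_m)
    (g : 'I_k -> 'I_e) :
  child_selection s f g -> cs_matrix S f g \in unitmx ->
  exists Rm : 'M[R]_(e, m),
    reactivity s Rm /\ \det (mxsub f f (S *m Rm)) != 0.
Proof.
move=> cs A_unit; have [f_inj _] := cs.
set A := cs_matrix S f g.
set B := rowsub f S *m colsub f (unselected_reactant_mx f g).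
have [t t_pos det_neq0] := exists_pos_det_scalar_add_neq0 (invmx A *m B).
exists (unselected_reactant_mx f g + t *: selection_mx R f g).
split; first exact: reactivity_unselected_add_selection.
have -> : mxsub f f (S *m (unselected_reactant_mx f g + t *: selection_mx R f g))
    = A *m (t%:M + invmx A *m B).
  rewrite [RHS]mulmxDr mul_mx_scalar mulKVmx // mxsub_mul linearD /= linearZ /=.
  by rewrite mulmxDr -scalemxAr mul_selection_mx // -cs_matrixE addrC.
by rewrite det_mulmx mulf_neq0 // -unitfE -unitmxE.
Qed.

End ChildSelections.

Theorem mainTheorem9 (R : realType) (m e : nat) (s st : 'M[R]_(m, e)) :
  network_coeffs s st ->
  crn_nondegenerate s st <->
  exists (f : 'I_(m - nconserv s st) -> 'I_m)
         (g : 'I_(m - nconserv s st) -> 'I_e),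
    child_selection s f g /\ cs_matrix (stoich s st) f g \in unitmx.
Proof.
move=> _; split.
  move=> [Rm [Rm_react [f [f_inj minor_neq0]]]].
  have [g cs] := child_selection_of_principal_minor Rm_react f_inj minor_neq0.
  by exists f, g.
move=> [f [g [cs A_unit]]].
have [Rm [Rm_react minor_neq0]] := principal_minor_of_child_selection cs A_unit.
by exists Rm; split=> //; exists f; split=> //; case: cs.
Qed.
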